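(* Let $\mathbb{F}$ be a field of characteristic $p>2$. Let $(\mathfrak g,[\cdot,\cdot],B)$ be a quadratic Lie algebra, $[p]:\mathfrak g\to\mathfrak g$ a $p$-mapping, and $\alpha\in\mathrm{End}_s(\mathfrak g,B)$ with $\alpha^2=\mathrm{id}$. Let $\mathfrak g_\alpha=(\mathfrak g,[\cdot,\cdot]_\alpha,\alpha,B_\alpha)$ where $[x,y]_\alpha=\alpha([x,y])$, $B_\alpha(x,y)=B(\alpha(x),y)$, and let $x^{[p]_\alpha}=\alpha^{p-1}(x^{[p]})$. Let $\mathscr{D}$ be a derivation of the Lie algebra $\mathfrak g$ which is restricted with respect to $[p]$, satisfies $\alpha\circ\mathscr{D}=\mathscr{D}\circ\alpha$, and has the $p$-property (there exist $\xi\in\mathbb{F}$, $a_0\in\mathfrak g$ with $\mathscr{D}^p=\xi\mathscr{D}+\mathrm{ad}(a_0)$ and $\mathscr{D}(a_0)=0$). Then $\mathscr{D}_\alpha:=\alpha\circ\mathscr{D}$ is an $\alpha$-derivation of $(\mathfrak g,[\cdot,\cdot]_\alpha,\alpha)$, it is restricted with respect to $[p]_\alpha$, i.e. $\mathscr{D}_\alpha(x^{[p]_\alpha})=[\alpha^{p-1}(x),[\alpha^{p-2}(x),\dots,[\alpha(x),\mathscr{D}_\alpha(x)]_\alpha\dots]_\alpha]_\alpha$ for all $x$, and $\mathscr{D}_\alpha$ has the $p$-property: there exist $\xi'\in\mathbb{F}$, $a_0'\in\mathfrak g$ with $\mathscr{D}_\alpha^p=\xi'\mathscr{D}_\alpha\circ\alpha^{p-1}+[a_0',\cdot]_\alpha\circ\alpha^{p-1}$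 and $\mathscr{D}_\alpha(a_0')=0$.
   Context: A quadratic Lie algebra is a Lie algebra with a symmetric nondegenerate invariant ($B([x,y],z)=B(x,[y,z])$) bilinear form $B$. $\mathrm{End}_s(\mathfrak g,B)$ is the set of linear $\phi$ with $B(\phi x,y)=B(x,\phi y)$. A $p$-mapping is Jacobson's restricted structure: $\mathrm{ad}(x^{[p]})=(\mathrm{ad}x)^p$, $(kx)^{[p]}=k^px^{[p]}$, and the usual sum formula $(x+y)^{[p]}=x^{[p]}+y^{[p]}+\sum_{i=1}^{p-1}s_i(x,y)$. A derivation $\mathscr{D}$ of $\mathfrak g$ is restricted with respect to $[p]$ if $\mathscr{D}(x^{[p]})=(\mathrm{ad}x)^{p-1}(\mathscr{D}(x))$ for all $x$. An $\alpha$-derivation of $(\mathfrak g,[\cdot,\cdot]_\alpha,\alpha)$ is a linear map $T$ with $T\circ\alpha=\alpha\circ T$ and $T([x,y]_\alpha)=[T(x),\alpha(y)]_\alpha+[\alpha(x),T(y)]_\alpha$. *)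

From HB Require Import structures.
From mathcomp Require Import all_boot all_order all_algebra.
Set Implicit Arguments. Unset Strict Implicit. Unset Printing Implicit Defensive.
Import Order.TTheory GRing.Theory Num.Theory.
Local Open Scope ring_scope.

Section LieDefs.
Variables (F : fieldType) (V : lmodType F).

Definition is_lie_bracket (br : V -> V -> V) : Prop :=
  [/\ (forall (a : F) x y z, br (a *: x + y) z = a *: br x z + br y z),
      (forall (a : F) x y z, br x (a *: y + z) = a *: br x y + br x z),
      (forall x, br x x = 0) &
      (forall x y z, br x (br y z) + br y (br z x) + br z (br x y) = 0)].

Definition is_quadratic (br : V -> V -> V) (B : V -> V -> F) : Prop :=
  [/\ (forall (a : F) x y z, B (a *: x + y) z = a * B x z + B y z),
      (forall x y, B x y = B y x),
      (forall x, (forall y, B x y = 0) -> x = 0) &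
      (forall x y z, B (br x y) z = B x (br y z))].

Definition is_B_symmetric (B : V -> V -> F) (phi : V -> V) : Prop :=
  forall x y, B (phi x) y = B x (phi y).

Definition adseq (br : V -> V -> V) (l : seq V) (z : V) : V :=
  foldr (fun u acc => br u acc) z l.

(* Jacobson's s_i(x,y): i s_i(x,y) is the coefficient of t^(i-1) in
   ad(t x + y)^(p-1)(x). Expanding, this coefficient is the sum over all words
   u in {x,y}^(p-1) containing exactly i-1 letters x of
   ad u_1 o ... o ad u_(p-1) (x). *)
Definition jacobson_s (p : nat) (br : V -> V -> V) (i : nat) (x y : V) : V :=
  (i%:R)^-1 *:
   \sum_(u : {ffun 'I_(p.-1) -> bool} | #|[set j | u j]| == i.-1)
      adseq br [seq (if u j then x else y) | j <- enum 'I_(p.-1)] x.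

Definition is_p_mapping (p : nat) (br : V -> V -> V) (pm : V -> V) : Prop :=
  [/\ (forall x y, br (pm x) y = iter p (br x) y),
      (forall (k : F) x, pm (k *: x) = k ^+ p *: pm x) &
      (forall x y, pm (x + y) = pm x + pm y + \sum_(1 <= i < p) jacobson_s p br i x y)].

Definition is_derivation (br : V -> V -> V) (D : V -> V) : Prop :=
  forall x y, D (br x y) = br (D x) y + br x (D y).

Definition is_restricted_derivation (p : nat) (br : V -> V -> V) (pm : V -> V)
  (D : V -> V) : Prop :=
  forall x, D (pm x) = iter p.-1 (br x) (D x).

Definition has_p_property (p : nat) (br : V -> V -> V) (D : V -> V) : Prop :=
  exists (xi : F) (a0 : V),
    (forall x, iter p D x = xi *: D x + br a0 x) /\ D a0 = 0.

Definition twist_bracket (br : V -> V -> V) (alpha : V -> V) : V -> V -> V :=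
  fun x y => alpha (br x y).
Definition twist_form (B : V -> V -> F) (alpha : V -> V) : V -> V -> F :=
  fun x y => B (alpha x) y.
Definition twist_pmap (p : nat) (pm : V -> V) (alpha : V -> V) : V -> V :=
  fun x => iter p.-1 alpha (pm x).

Definition is_alpha_derivation (br : V -> V -> V) (alpha : V -> V) (T : V -> V)
  : Prop :=
  (forall x, T (alpha x) = alpha (T x)) /\
  (forall x y, T (br x y) = br (T x) (alpha y) + br (alpha x) (T y)).

Fixpoint nested_twisted (br : V -> V -> V) (alpha : V -> V) (x z : V) (k : nat)
  : V :=
  match k with
  | 0 => z
  | k'.+1 => br (iter k alpha x) (nested_twisted br alpha x z k')
  end.

End LieDefs.

(* Since p > 2 is an odd prime, p - 1 is even, so the involution alpha
   satisfies alpha^(p-1) = id and alpha^p = alpha.  Because alpha is a bracket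
   automorphism commuting with D, every twisted expression is an untwisted one
   followed by a power of alpha: D_alpha^n = alpha^n D^n, and the nested
   twisted bracket of length k is alpha^(k+1) (ad x)^k.  The three claims then
   reduce to the corresponding properties of D, with xi' = xi and a0' = a0. *)

From HB Require Import structures.
From mathcomp Require Import all_boot all_order all_algebra.

Set Implicit Arguments.
Unset Strict Implicit.
Unset Printing Implicit Defensive.

Import GRing.Theory.
Local Open Scope ring_scope.

Lemma odd_pchar (R : nzRingType) (p : nat) :
  p \in [pchar R] -> (2 < p)%N -> odd p.
Proof.
move=> /pcharf_prime p_prime p_gt2.
by case: (even_prime p_prime) => // p_eq2; rewrite p_eq2 in p_gt2.
Qed.

Section Iterates.
Variables (T : Type) (f g : T -> T).

Lemma iter_involutive : involutive f ->
  forall n, iter n f =1 if odd n then f else id.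
Proof.
move=> fK; elim=> [//|n IH] x.
by rewrite iterS IH /=; case: (odd n) => /=.
Qed.

Lemma iter_involutive_odd_pred : involutive f ->
  forall n, odd n -> iter n.-1 f =1 id.
Proof.
move=> fK n n_odd x; rewrite iter_involutive //.
by case: n n_odd => //= n; case: (odd n).
Qed.

Lemma iter_commute : (forall x, f (g x) = g (f x)) ->
  forall n x, iter n f (g x) = g (iter n f x).
Proof. by move=> fg; elim=> [//|n IH] x; rewrite !iterS IH fg. Qed.

Lemma iter_comp_commute : (forall x, f (g x) = g (f x)) ->
  forall n x, iter n (f \o g) x = iter n f (iter n g x).
Proof.
move=> fg; elim=> [//|n IH] x.
by rewrite !iterS IH /= iter_commute.
Qed.

Lemma iter_morph2 (op : T -> T -> T) : {morph f : x y / op x y} ->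
  forall n, {morph iter n f : x y / op x y}.
Proof. by move=> f_op; elim=> [//|n IH] x y; rewrite !iterS IH f_op. Qed.

End Iterates.

Section TwistedDerivation.
Variables (F : fieldType) (V : lmodType F) (br : V -> V -> V) (alpha : V -> V).
Hypotheses (alphaK : involutive alpha) (alpha_br : {morph alpha : x y / br x y}).

Let bra := twist_bracket br alpha.

Lemma twist_alpha_derivation (D : V -> V) :
  is_derivation br D -> (forall x, alpha (D x) = D (alpha x)) ->
  is_alpha_derivation bra alpha (alpha \o D).
Proof.
move=> D_der alphaD; split=> [x | x y] /=; first by rewrite -alphaD.
by rewrite /bra /twist_bracket -alphaD alphaK D_der !alpha_br !alphaK.
Qed.

Lemma nested_twistedE x z k :
  nested_twisted bra alpha x (alpha z) k = iter k.+1 alpha (iter k (br x) z).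
Proof.
elim: k => [//|k IH] /=; rewrite IH /bra /twist_bracket.
by rewrite (iter_morph2 alpha_br) !alpha_br.
Qed.

Lemma twist_restricted_derivation (p : nat) (pm D : V -> V) : odd p ->
  is_restricted_derivation p br pm D ->
  forall x, alpha (D (twist_pmap p pm alpha x))
            = nested_twisted bra alpha x (alpha (D x)) p.-1.
Proof.
move=> p_odd D_res x.
rewrite /twist_pmap iter_involutive_odd_pred // D_res nested_twistedE.
by rewrite prednK ?odd_gt0 // (iter_involutive alphaK) p_odd.
Qed.

Lemma twist_p_property (p : nat) (D : V -> V) (xi : F) (a0 : V) :
  linear alpha -> odd p -> (forall x, alpha (D x) = D (alpha x)) ->
  (forall x, iter p D x = xi *: D x + br a0 x) ->
  forall x, iter p (alpha \o D) x
            = xi *: alpha (D (iter p.-1 alpha x)) + bra a0 (iter p.-1 alpha x).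
Proof.
move=> alpha_lin p_odd alphaD Dp x.
rewrite iter_involutive_odd_pred // iter_comp_commute // Dp.
by rewrite (iter_involutive alphaK) p_odd alpha_lin.
Qed.

End TwistedDerivation.

Theorem proposition5p3 (F : fieldType) (p : nat) (V : lmodType F)
  (br : V -> V -> V) (B : V -> V -> F) (pm : V -> V)
  (alpha D : {linear V -> V}) :
  p \in [pchar F] -> (2 < p)%N ->
  is_lie_bracket br -> is_quadratic br B ->
  is_p_mapping p br pm ->
  is_B_symmetric B alpha ->
  (forall x, alpha (alpha x) = x) ->
  (forall x y, alpha (br x y) = br (alpha x) (alpha y)) ->
  is_derivation br D ->
  is_restricted_derivation p br pm D ->
  (forall x, alpha (D x) = D (alpha x)) ->
  has_p_property p br D ->
  let bra := twist_bracket br alpha in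
  let pma := twist_pmap p pm alpha in
  let Da := fun x => alpha (D x) in
  [/\ is_alpha_derivation bra alpha Da,
      (forall x, Da (pma x) = nested_twisted bra alpha x (Da x) p.-1) &
      exists (xi' : F) (a0' : V),
        (forall x, iter p Da x
                   = xi' *: Da (iter p.-1 alpha x) + bra a0' (iter p.-1 alpha x))
        /\ Da a0' = 0].
Proof.
move=> pcharFp p_gt2 _ _ _ _ alphaK alpha_br D_der D_res alphaD
  [xi [a0 [Dp Da0]]] bra pma Da.
have p_odd := odd_pchar pcharFp p_gt2.
split.
- exact (twist_alpha_derivation alphaK alpha_br D_der alphaD).
- exact (twist_restricted_derivation alphaK alpha_br p_odd D_res).
- exists xi, a0; split; last by rewrite /Da Da0 linear0.
  exact (twist_p_property alphaK (linearP alpha) p_odd alphaD Dp).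
Qed.
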